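(* For all integers $m\ge1$ and $r\ge2$, the determinant of the Hessian matrix $\big(\partial_{\xi_i}\partial_{\xi_j}A_r(\xi)\big)_{i,j=1}^m$ is a nonzero polynomial in $\xi=(\xi_1,\dots,\xi_m)$.
   Context: $A_r(\xi_1,\dots,\xi_m)=\sum_{k\in\mathbb N^m,\ \sum_ik_i=r}\binom{r}{k_1,\dots,k_m}^2\prod_i\xi_i^{k_i}$, where $\binom{r}{k_1,\dots,k_m}$ is the multinomial coefficient. *)

From HB Require Import structures.
From mathcomp Require Import all_boot all_order all_algebra.
Set Implicit Arguments. Unset Strict Implicit. Unset Printing Implicit Defensive.
Import Order.TTheory GRing.Theory Num.Theory.
Local Open Scope ring_scope.

Fixpoint mpoly (n : nat) : comNzRingType :=
  match n with
  | 0 => int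
  | n'.+1 => {poly (mpoly n')}
  end.

(* The variable xi_(i+1) (0-based index i) in mpoly n; variable i < n' of
   mpoly n'.+1 is the constant (in the outer variable) polynomial var n' i,
   and variable n' is the outer indeterminate 'X. *)
Fixpoint var (n : nat) (i : nat) : mpoly n :=
  match n return mpoly n with
  | 0 => 0
  | n'.+1 => if i == n' then 'X else (@var n' i)%:P
  end.

Fixpoint pderiv (n : nat) (i : nat) : mpoly n -> mpoly n :=
  match n return mpoly n -> mpoly n with
  | 0 => fun _ => 0
  | n'.+1 => fun p : {poly mpoly n'} =>
      if i == n' then deriv p else map_poly (@pderiv n' i) p
  end.

Definition multinom (m r : nat) (k : {ffun 'I_m -> 'I_r.+1}) : nat :=
  (r`! %/ \prod_(i < m) (k i)`!)%N.

Definition A_poly (m r : nat) : mpoly m :=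
  \sum_(k : {ffun 'I_m -> 'I_r.+1} | (\sum_(i < m) (k i : nat))%N == r)
     ((multinom k) ^ 2)%N%:R * \prod_(i < m) @var m i ^+ k i.

Definition hessian (m : nat) (p : mpoly m) : 'M[mpoly m]_m :=
  \matrix_(i < m, j < m) @pderiv m i (@pderiv m j p).

From HB Require Import structures.
From mathcomp Require Import all_boot all_order all_algebra.
From mathcomp Require Import zify ring lra.
Set Implicit Arguments. Unset Strict Implicit. Unset Printing Implicit Defensive.
Import Order.TTheory GRing.Theory Num.Theory.
Local Open Scope ring_scope.

(** Evaluate the Hessian at xi = (1, 0, ..., 0). There the entry d_i d_j A_r
    only sees the monomial xi_1^(r-2) xi_i xi_j, so with x = r (r - 1) the
    evaluated Hessian is an arrow matrix: x in the corner, r x on the rest of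
    the first row and column, and a lower block with x^2 / 2 on the diagonal
    and x^2 off it. Since x^2 / 2 < x^2 and x * x^2 <= (r x)^2, any kernel
    vector of such a matrix vanishes, so its determinant is nonzero. *)

Section ArrowMatrix.
Variables (R : realFieldType) (n : nat) (a b c d : R).

Definition arrowmx : 'M[R]_n.+1 := \matrix_(i, j)
  if i == ord0 then (if j == ord0 then a else b)
  else if j == ord0 then b else if i == j then d else c.

Lemma det_arrowmx_neq0 : 0 < a -> d < c -> a * c <= b ^+ 2 -> \det arrowmx != 0.
Proof.
move=> a_gt0 lt_dc le_ac_b2; apply/negP => /det0P [v v_neq0 v_ker].
set S := \sum_(j | j != ord0) v 0 j; set v0 := v 0 ord0.
have col k : \sum_j v 0 j * arrowmx j k = 0.
  by move/rowP/(_ k): v_ker; rewrite !mxE.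
have col0 : a * v0 + b * S = 0.
  move: (col ord0); rewrite (bigD1 ord0) //= mxE eqxx mulrC mulr_sumr.
  congr (_ + _ = 0); apply: eq_bigr => j /negbTE nej0.
  by rewrite mxE nej0 eqxx mulrC.
have colk k : k != ord0 -> (c - d) * v 0 k = b * v0 + c * S.
  move=> nek0; move: (col k); rewrite (bigD1 ord0) //= (bigD1 k) //=.
  have rest : \sum_(j | (j != ord0) && (j != k)) v 0 j * arrowmx j k = c * (S - v 0 k).
    rewrite /S [in RHS](bigD1 k) //= addrC addrK mulr_sumr.
    apply: eq_bigr => j /andP [/negbTE nej0 /negbTE nejk].
    by rewrite mxE nej0 (negbTE nek0) nejk mulrC.
  rewrite rest !mxE !eqxx (negbTE nek0) /= -/v0 => colk_eq.
  lra.
have sum_colk : (c - d) * S = (b * v0 + c * S) *+ n.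
  by rewrite /S mulr_sumr (eq_bigr _ colk) sumr_const cardC1 card_ord.
(* Sum the columns k != 0, then eliminate v0 using column 0. *)
have key : (a * (c - d) + (b ^+ 2 - a * c) *+ n) * S = (b * (a * v0 + b * S)) *+ n.
  by rewrite mulrDl -mulrA sum_colk; ring.
have coef_gt0 : 0 < a * (c - d) + (b ^+ 2 - a * c) *+ n.
  by apply: ltr_wpDr; rewrite ?mulrn_wge0 ?mulr_gt0 // ?subr_ge0 ?subr_gt0.
have S0 : S = 0.
  by move: key; rewrite col0 mulr0 mul0rn => /eqP; rewrite mulf_eq0 gt_eqF // => /eqP.
have v00 : v0 = 0.
  by move: col0; rewrite S0 mulr0 addr0 => /eqP; rewrite mulf_eq0 gt_eqF // => /eqP.
case/negP: v_neq0; apply/eqP/rowP => k; rewrite !mxE.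
have [-> // | nek0] := eqVneq k ord0.
move: (colk k nek0); rewrite v00 S0 !mulr0 addr0 => /eqP.
by rewrite mulf_eq0 subr_eq0 gt_eqF // => /eqP.
Qed.

End ArrowMatrix.
Arguments arrowmx {R n}.

Lemma pderivB n i : {morph @pderiv n i : p q / p - q}.
Proof.
elim: n => [|n IH] p q /=; first by rewrite subr0.
case: eqP => _; first exact: derivB.
have pderiv0 : @pderiv n i 0 = 0 by have := IH 0 0; rewrite !subrr.
by apply/polyP => k; rewrite coefB !coef_map_id0 // coefB IH.
Qed.

HB.instance Definition _ n i :=
  GRing.isZmodMorphism.Build (mpoly n) (mpoly n) (@pderiv n i) (@pderivB n i).

Lemma pderivM n i (p q : mpoly n) :
  pderiv i (p * q) = pderiv i p * q + p * pderiv i q.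
Proof.
elim: n p q => [|n IH] p q /=; first by rewrite mul0r mulr0 addr0.
case: eqP => _; first exact: derivM.
apply/polyP => k; rewrite coefD !coefM !coef_map coefM raddf_sum -big_split /=.
by apply: eq_bigr => l _; rewrite IH !coef_map.
Qed.

Lemma pderiv1 n i : @pderiv n i 1 = 0.
Proof.
have := pderivM i (1 : mpoly n) 1; rewrite !mulr1 mul1r.
by move/(congr1 (fun y => y - pderiv i 1)); rewrite subrr addrK => /esym.
Qed.

Lemma pderiv_var n i j : (i < n)%N -> (j < n)%N -> pderiv i (var n j) = (i == j)%:R.
Proof.
elim: n => [//|n IH] ltin ltjn /=.
have [-> | nejn] := eqVneq j n.
  have [_ | nein] := eqVneq i n; first by rewrite derivX.
  apply/polyP => k.
  by rewrite coef_map coefX raddfMn /= pderiv1 mul0rn mulr0n coef0.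
have ltjn' : (j < n)%N by rewrite ltn_neqAle nejn -ltnS.
have [-> | nein] := eqVneq i n; first by rewrite derivC eq_sym (ltn_eqF ltjn').
have ltin' : (i < n)%N by rewrite ltn_neqAle nein -ltnS.
by rewrite map_polyC /= IH // polyC_natr.
Qed.

Lemma pderivXn n i (p : mpoly n) k : pderiv i (p ^+ k) = p ^+ k.-1 * pderiv i p *+ k.
Proof.
elim: k => [|k IH]; first by rewrite expr0 pderiv1 mulr0n.
rewrite exprS pderivM IH mulrnAr mulrA mulrS; case: k IH => [|k] _.
  by rewrite !mulr0n !addr0 expr0 mul1r mulr1.
by rewrite /= -exprS mulrC.
Qed.

Definition monomial n (e : 'I_n -> nat) : mpoly n := \prod_(l < n) var n l ^+ e l.

Lemma pderiv_monomial n (i : 'I_n) (e : 'I_n -> nat) :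
  pderiv i (monomial e) = monomial (fun l => e l - (l == i))%N *+ e i.
Proof.
have pderiv_rest : pderiv i (\prod_(l < n | l != i) var n l ^+ e l) = 0.
  apply: (big_ind (fun p => pderiv i p = 0)) => [|p q dp dq|l neli].
  - exact: pderiv1.
  - by rewrite pderivM dp dq mul0r mulr0 addr0.
  have /negbTE neli_nat : (i : nat) != l by rewrite eq_sym.
  by rewrite pderivXn pderiv_var // neli_nat mulr0 mul0rn.
rewrite /monomial (bigD1 i) //= pderivM pderiv_rest mulr0 addr0.
rewrite [in RHS](bigD1 i) //= eqxx subn1 pderivXn pderiv_var // eqxx mulr1.
rewrite -mulrnAl; congr (_ * _).
by apply: eq_bigr => l /negbTE ->; rewrite subn0.
Qed.

Lemma pderiv2_monomial n (i j : 'I_n) (e : 'I_n -> nat) :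
  pderiv i (pderiv j (monomial e)) =
  monomial (fun l => e l - (l == j) - (l == i))%N *+ (e j * (e i - (i == j))).
Proof. by rewrite pderiv_monomial raddfMn /= pderiv_monomial -mulrnA mulnC. Qed.

Section Evaluation.
Variables (R : comNzRingType) (x : nat -> int).

Fixpoint meval n : mpoly n -> R :=
  match n return mpoly n -> R with
  | 0 => fun c => c%:~R
  | n'.+1 => fun p => meval (p.[(x n')%:~R])
  end.
Arguments meval {n}.

Lemma mevalB n : {morph @meval n : p q / p - q}.
Proof. by elim: n => [|n IH] p q /=; rewrite ?intrB // hornerD hornerN IH. Qed.

Lemma mevalM n : {morph @meval n : p q / p * q}.
Proof. by elim: n => [|n IH] p q /=; rewrite ?intrM // hornerM IH. Qed.

Lemma meval1 n : @meval n 1 = 1.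
Proof. by elim: n => [|n IH] //=; rewrite hornerC IH. Qed.

HB.instance Definition _ n :=
  GRing.isZmodMorphism.Build (mpoly n) R (@meval n) (@mevalB n).
HB.instance Definition _ n :=
  GRing.isMonoidMorphism.Build (mpoly n) R (@meval n) (conj (@meval1 n) (@mevalM n)).

Lemma meval_var n l : (l < n)%N -> meval (var n l) = (x l)%:~R.
Proof.
elim: n => [//|n IH] ltln /=.
have [-> | nelm] := eqVneq l n; first by rewrite hornerX rmorph_int.
by rewrite hornerC IH // ltn_neqAle nelm -ltnS.
Qed.

Lemma meval_monomial n (e : 'I_n -> nat) :
  meval (monomial e) = \prod_(l < n) (x l)%:~R ^+ e l.
Proof. by rewrite rmorph_prod; apply: eq_bigr => l _; rewrite rmorphXn /= meval_var. Qed.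

End Evaluation.
Arguments meval R x {n}.

Definition unit0 (l : nat) : int := (l == 0)%N%:Z.

Lemma meval_unit0_monomial (R : comNzRingType) n (e : 'I_n -> nat) :
  meval R unit0 (monomial e) = [forall l : 'I_n, (l != 0 :> nat) ==> (e l == 0)%N]%:R.
Proof.
rewrite meval_monomial; case: (boolP [forall _, _]) => [/forallP e_off0 | /forallPn [l]].
  apply: big1 => l _; have [-> | nel0] := eqVneq (l : nat) 0%N; first exact: expr1n.
  by move/implyP/(_ nel0)/eqP: (e_off0 l) => ->.
rewrite negb_imply => /andP [nel0 el_neq0].
by rewrite (bigD1 l) //= /unit0 (negbTE nel0) expr0n (negbTE el_neq0) mul0r.
Qed.

Lemma meval_unit0_hessianA_sum (R : comNzRingType) n r (i j : 'I_n) :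
  meval R unit0 (hessian (A_poly n r) i j) =
  (\sum_(k : {ffun 'I_n -> 'I_r.+1} | (\sum_(l < n) (k l : nat))%N == r)
     multinom k ^ 2 * (k j * (k i - (i == j))) *
     [forall l : 'I_n, (l != 0 :> nat) ==> (k l - (l == j) - (l == i) == 0)])%N%:R.
Proof.
rewrite mxE /A_poly !raddf_sum /=; apply: eq_bigr => k _.
rewrite mulr_natl !raddfMn /= (pderiv2_monomial i j (fun l => k l)).
by rewrite rmorphMn /= meval_unit0_monomial -!mulrnA mulnC (mulnC (k j * _)%N).
Qed.

Section HessianExponent.
Variables (n s : nat) (i j : 'I_n.+1).

(* The exponent s e_0 + e_i + e_j: the only one of degree s + 2 whose
   monomial survives d_i d_j followed by evaluation at unit0. *)
Definition hessian_exponent (l : 'I_n.+1) : nat :=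
  (s * (l == ord0) + (l == i) + (l == j))%N.

Lemma sum_hessian_exponent : (\sum_l hessian_exponent l)%N = s.+2.
Proof.
have sum_eq1 (i0 : 'I_n.+1) : (\sum_l (l == i0) = 1)%N.
  by rewrite (bigD1 i0) //= eqxx big1 // => l /negbTE ->.
by rewrite !big_split /= !sum_eq1 -big_distrr /= sum_eq1 muln1 !addn1.
Qed.

Lemma hessian_exponent_lt l : (hessian_exponent l < s.+3)%N.
Proof.
by rewrite /hessian_exponent; case: (l == ord0); case: (l == i); case: (l == j) => /=; lia.
Qed.

Lemma hessian_exponent_unique (k : 'I_n.+1 -> nat) :
  (\sum_l k l)%N = s.+2 -> (0 < k j * (k i - (i == j)))%N ->
  (forall l, l != ord0 -> k l - (l == j) - (l == i) = 0)%N ->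
  k =1 hessian_exponent.
Proof.
move=> sum_k; rewrite muln_gt0 subn_gt0 => /andP [kj_gt0 ki_gt] k_off0.
have k_ge l : ((l == i) + (l == j) <= k l)%N.
  move: kj_gt0 ki_gt; case: (eqVneq l i) => [-> | _].
    by case: (eqVneq i j) => [<- | _]; rewrite ?eqxx /=; lia.
  by case: (eqVneq l j) => [-> | _] /=; lia.
have k_eq_off0 l : l != ord0 -> k l = hessian_exponent l.
  move=> nel0; move: (k_off0 l nel0) (k_ge l).
  by rewrite /hessian_exponent (negbTE nel0); lia.
move=> l; have [-> | /k_eq_off0 //] := eqVneq l ord0.
move: sum_k; rewrite -sum_hessian_exponent (bigD1 ord0) //= [in RHS](bigD1 ord0) //=.
by rewrite (eq_bigr _ (fun l nel0 => k_eq_off0 l nel0)) => /addIn.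
Qed.

Definition hessian_index : {ffun 'I_n.+1 -> 'I_s.+3} :=
  [ffun l => inord (hessian_exponent l)].

Lemma hessian_indexE l : hessian_index l = hessian_exponent l :> nat.
Proof. by rewrite ffunE inordK // hessian_exponent_lt. Qed.

End HessianExponent.

Lemma meval_unit0_hessianA (R : comNzRingType) n s (i j : 'I_n.+1) :
  meval R unit0 (hessian (A_poly n.+1 s.+2) i j) =
  (multinom (hessian_index s i j) ^ 2 *
   (hessian_exponent s i j j * (hessian_exponent s i j i - (i == j))))%N%:R.
Proof.
rewrite meval_unit0_hessianA_sum (bigD1 (hessian_index s i j)) /=; last first.
  by rewrite (eq_bigr _ (fun l _ => hessian_indexE s i j l)) sum_hessian_exponent.
rewrite big1 => [|k /andP [/eqP sum_k neK]].
  set off0 := [forall _, _]; suff -> : off0 by rewrite addn0 muln1 !hessian_indexE.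
  apply/forallP => l.
  apply/implyP => nel0; have /negbTE nel0' : l != ord0 := nel0.
  by rewrite hessian_indexE /hessian_exponent nel0'; lia.
case: (posnP (k j * (k i - (i == j)))) => [-> | pos]; first by rewrite muln0 mul0n.
case: forallP => [k_off0 | _]; last by rewrite muln0.
case/eqP: neK; apply/ffunP => l; apply: val_inj; rewrite /= hessian_indexE.
apply: (hessian_exponent_unique sum_k pos) => l' nel'0.
by apply/eqP; move/implyP: (k_off0 l'); apply.
Qed.

Lemma prod_fact_hessian_exponent n s (i j : 'I_n.+1) :
  (\prod_l (hessian_exponent s i j l)`! =
   (hessian_exponent s i j ord0)`! * (if (i == j) && (i != ord0) then 2 else 1))%N.
Proof.
rewrite (bigD1 ord0) //=; congr (_ * _)%N.
rewrite (eq_bigr (fun l => ((l == i) + (l == j))`!)%N); last first.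
  by move=> l /negbTE nel0; rewrite /hessian_exponent nel0 muln0.
case: ifP => [/andP [/eqP <- nei0] | diag_off].
  by rewrite (bigD1 i) //= eqxx big1 // => l /andP [_ /negbTE ->].
apply: big1 => l nel0; case: (eqVneq l i) => [eqli | _]; last by case: (l == j).
by case: (eqVneq l j) => [eqlj | _ //]; rewrite -eqli -eqlj eqxx nel0 in diag_off.
Qed.

Lemma map_meval_unit0_hessianA n s :
  let x : rat := (s.+2 * s.+1)%:R in
  map_mx (meval rat unit0) (hessian (A_poly n.+1 s.+2)) =
  arrowmx x (x * (s.+2)%:R) (x ^+ 2) (x ^+ 2 / 2).
Proof.
move=> x; apply/matrixP => i j.
rewrite [LHS]mxE meval_unit0_hessianA mxE /multinom.
rewrite (eq_bigr (fun l => (hessian_exponent s i j l)`!)) => [|l _]; last first.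
  by rewrite hessian_indexE.
(* The multinomial coefficients of the five entry shapes are 1, r, r,
   'C(r, 2) and r (r - 1). *)
rewrite prod_fact_hessian_exponent /hessian_exponent !eqxx.
rewrite [ord0 == i]eq_sym [ord0 == j]eq_sym [j == i]eq_sym.
have [ei0 | nei0] := eqVneq i ord0; have [ej0 | nej0] := eqVneq j ord0.
all: rewrite ?eqxx ?[ord0 == _]eq_sym ?(negbTE nei0) ?(negbTE nej0) /=.
all: rewrite ?muln1 ?muln0 ?add0n ?addn0 ?addn1.
- by rewrite ei0 ej0 eqxx /= muln1 divnn fact_gt0 exp1n mul1n subn1 !addn1.
- rewrite ei0 eq_sym (negbTE nej0) /= muln1 factS mulnK ?fact_gt0 // subn0 /x -!natrM.
  by congr _%:R; ring.
- rewrite ej0 (negbTE nei0) /= muln1 factS mulnK ?fact_gt0 // subn0 /x -!natrM.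
  by congr _%:R; ring.
case: (i == j) => /=.
  have bin2E : ('C(s.+2, 2) * 2 = s.+2 * s.+1)%N by rewrite mulnC -mul_bin_diag bin1.
  have -> : (s`! * 2 = 2`! * (s.+2 - 2)`!)%N by rewrite mulnC !subSS subn0.
  rewrite -bin_factd // /x -bin2E.
  by rewrite addn1 subSS subn0 !natrM; field.
by rewrite muln1 !factS (mulnA s.+2) mulnK ?fact_gt0 // addn0 subn0 !muln1 natrX.
Qed.

Theorem mainTheorem7 (m r : nat) (hm : (1 <= m)%N) (hr : (2 <= r)%N) :
  \det (hessian (A_poly m r)) != 0.
Proof.
case: m hm => [//|n] _; case: r hr => [|[|s]] // _.
set x : rat := (s.+2 * s.+1)%:R.
have x_gt0 : 0 < x by rewrite ltr0n muln_gt0.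
have x2_gt0 : 0 < x ^+ 2 by rewrite exprn_gt0.
have lt_dc : x ^+ 2 / 2 < x ^+ 2 by lra.
have le_ac_b2 : x * x ^+ 2 <= (x * (s.+2)%:R) ^+ 2.
  rewrite exprMn mulrC ler_pM2l // /x -natrX ler_nat -mulnn leq_mul2l leqnSn orbT //.
move: (det_arrowmx_neq0 n x_gt0 lt_dc le_ac_b2).
rewrite -map_meval_unit0_hessianA det_map_mx.
by apply: contra_neq => ->; rewrite rmorph0.
Qed.
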